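(* Let $T>0$, let $h:(0,\infty)\to(0,\infty)$ be bounded with $\lim_{u\to0^+}h(u)=\lim_{u\to+\infty}h(u)=0$, and let $A\in C^1([0,T]\times(0,1)^n;\mathbb S(n))$ satisfy $|A_{ij}(s,\mu)|\le(\mu^i+\mu^j)h(\mu^j/\mu^i)$ for all $(i,j)\in\mathbb E$ and $(s,\mu)\in[0,T]\times(0,1)^n$. There exists a constant $K>1$, depending only on $n$, $\omega_{\min}$, $\omega_{\max}$ and $h$, such that the following holds. Let $\epsilon>0$, $\mu\in\mathcal P_\epsilon(\mathbb G)$, $t_0\in(0,T]$, and let $\rho\in C^1([0,t_0];(0,1)^n)$ be a classical solution of $\dot\rho(s)=\nabla_{\mathbb G}\cdot A(s,\rho(s))+\Delta_{\mathbb G}\rho(s)$, $\rho(0)=\mu$. If $\delta\in(0,\epsilon/K)$, $i_0\in\{1,\dots,n\}$, and $t_0$ is the first time such that $\rho_{i_0}(t_0)=\delta$, then $$\min_{s\in[0,t_0]}\rho_i(s)\le K\delta\qquad\text{for all }i\in\{1,\dots,n\}.$$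
   Context: $\mathbb G=(\mathbb V,\mathbb E,\omega)$: finite, connected, simple undirected graph, $\mathbb V=\{1,\dots,n\}$, edges ordered pairs with $(i,j)\in\mathbb E\iff(j,i)\in\mathbb E$, symmetric weights $\omega_{ij}>0$ iff $(i,j)\in\mathbb E$; $\omega_{\min},\omega_{\max}$ the min/max edge weights. $\mathbb S(n)$: skew-symmetric $n\times n$ matrices. $(\nabla_{\mathbb G}\cdot m)^i=\sum_{j\ne i}\sqrt{\omega_{ij}}m^{ji}$; $(\Delta_{\mathbb G}u)^i=\sum_j\omega_{ij}(u^j-u^i)$. $\mathcal P_\epsilon(\mathbb G)$: probability vectors in $\mathbb R^n$ with all entries $>\epsilon$. $\rho_i$ denotes the $i$-th component. *)

From mathcomp Require Import all_boot all_order all_algebra.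
From mathcomp Require Import all_classical all_reals all_analysis.
Import Order.TTheory GRing.Theory Num.Theory.
Local Open Scope ring_scope.
Local Open Scope classical_set_scope.

Set Implicit Arguments.
Unset Strict Implicit.
Unset Printing Implicit Defensive.

(* Vectors in R^n are row vectors 'rV[R]_n; the i-th component of x is x ord0 i.
   Vertices {1,...,n} are represented by 'I_n = {0,...,n-1}. *)

(* f is C^1 on the (not necessarily open) set D : f is C^1 (all directional
   derivatives exist and are continuous) on some open set U containing D. *)
Definition C1_on (R : realType) (V W : normedModType R) (D : set V) (f : V -> W) : Prop :=
  exists U : set V, open U /\ D `<=` U /\
    forall v : V,
      (forall x, U x -> derivable f x v) /\
      (forall x, U x -> ('D_v f) y @[y --> x] --> ('D_v f) x).

(* weighted graph given by its weight matrix: omega_ij > 0 iff (i,j) is an edge;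
   symmetric, no loops (simple), connected *)
Definition weighted_graph (R : realType) (n : nat) (w : 'I_n -> 'I_n -> R) : Prop :=
  (forall i j, w i j = w j i) /\ (forall i, w i i = 0) /\ (forall i j, 0 <= w i j) /\
  (forall i j, connect [rel a b | 0 < w a b] i j).

Definition is_min_weight (R : realType) (n : nat) (w : 'I_n -> 'I_n -> R) (m : R) : Prop :=
  (forall i j, 0 < w i j -> m <= w i j) /\ (exists i j, 0 < w i j /\ w i j = m).
Definition is_max_weight (R : realType) (n : nat) (w : 'I_n -> 'I_n -> R) (m : R) : Prop :=
  (forall i j, 0 < w i j -> w i j <= m) /\ (exists i j, 0 < w i j /\ w i j = m).

Definition graph_div (R : realType) (n : nat) (w : 'I_n -> 'I_n -> R) (m : 'M[R]_n) : 'rV[R]_n :=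
  \row_i \sum_(j < n | j != i) Num.sqrt (w i j) * m j i.

Definition graph_lap (R : realType) (n : nat) (w : 'I_n -> 'I_n -> R) (u : 'rV[R]_n) : 'rV[R]_n :=
  \row_i \sum_(j < n) w i j * (u ord0 j - u ord0 i).

Definition in_unit_cube (R : realType) (n : nat) (x : 'rV[R]_n) : Prop :=
  forall i, 0 < x ord0 i < 1.

Definition P_eps (R : realType) (n : nat) (eps : R) (mu : 'rV[R]_n) : Prop :=
  (\sum_(i < n) mu ord0 i = 1) /\ (forall i, eps < mu ord0 i).

Definition time_cube (R : realType) (n : nat) (T : R) : set (R * 'rV[R]_n)%type :=
  [set p | 0 <= p.1 <= T /\ in_unit_cube p.2].

Definition h_admissible (R : realType) (h : R -> R) : Prop :=
  (forall u, 0 < u -> 0 < h u) /\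
  (exists M, forall u, 0 < u -> h u <= M) /\
  (h u @[u --> 0^'+] --> 0) /\
  (h u @[u --> +oo] --> 0).

From mathcomp Require Import all_boot all_order all_algebra.
From mathcomp Require Import all_classical all_reals all_analysis.
From mathcomp Require Import lra.
Import Order.TTheory GRing.Theory Num.Theory.
Local Open Scope ring_scope.
Local Open Scope classical_set_scope.
Import numFieldNormedType.Exports.

Set Implicit Arguments.
Unset Strict Implicit.
Unset Printing Implicit Defensive.

(* If rho_j(s) <= L < eps for some s, the minimum of rho_j over [0, t0] is attained at a
   time tm > 0 (as rho_j(0) > eps), where 'D_1 rho_j <= 0: the right-hand side of the
   equation at vertex j is nonpositive.  It is the sum over k of the edge fluxes
   sqrt(w_jk) A_kj + w_jk (rho_k - rho_j).  Each flux is at least -B rho_j, and for a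
   neighbour with rho_k > c rho_j the smallness of h(rho_j / rho_k) makes it at least
   wmin rho_k / 2 - wmax rho_j.  Hence rho_k(tm) <= C rho_j(tm) for every neighbour k, with
   C depending only on n, wmin, wmax and h.  Propagating from rho_i0(t0) = delta along a
   path of fewer than n edges gives min rho_i <= C^(n+1) delta whenever C^(n+1) delta < eps.
   Only rho_i0(t0) = delta is used, not that t0 is the first such time. *)

Lemma derive1_entry_le0_at_left_min (R : realType) (m n : nat)
    (f : R -> 'M[R]_(m, n)) (a t : R) (i : 'I_m) (j : 'I_n) :
  derivable f t 1 -> a < t -> (forall s, a <= s <= t -> f t i j <= f s i j) ->
  'D_1 f t i j <= 0.
Proof.
move=> f_der a_lt_t t_min.
set q := fun d : R => d^-1 *: ((f \o shift t) (d *: (1 : R)) - f t).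
have q_cvg : q @ 0^' --> 'D_1 f t by exact: f_der.
have qij_cvg : (fun d => q d i j) @ 0^'- --> ('D_1 f t i j : R).
  exact/cvg_dnbhs_at_left/(continuous_cvg _ (@coord_continuous R m n i j _) q_cvg).
rewrite -(cvg_lim _ qij_cvg) //; apply: limr_le; first by apply/cvg_ex; exists ('D_1 f t i j).
near=> d.
have d_lt0 : d < 0 by near: d; exact: nbhs_left_lt.
have a_lt : a - t < d by near: d; apply: nbhs_left_gt; rewrite subr_lt0.
rewrite /q !mxE /= /shift; apply: mulr_le0_ge0; first by rewrite invr_le0 ltW.
rewrite subr_ge0 t_min // -[d%:A]/(d * 1) mulr1; apply/andP; split; lra.
Unshelve. all: by end_near.
Qed.

Lemma cvg_at_right0_le (R : realType) (f : R -> R) (e : R) : 0 < e ->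
  f u @[u --> 0^'+] --> 0 -> exists2 c, 1 < c & forall u, 0 < u -> c * u < 1 -> f u <= e.
Proof.
move=> e_gt0 /cvgr0_norm_le/(_ _ e_gt0)[r /= r_gt0 f_small].
exists (1 + r^-1) => [|u u_gt0 cu_lt1]; first by rewrite ltrDl invr_gt0.
apply: le_trans (ler_norm _) (f_small u _ u_gt0).
rewrite /= sub0r normrN gtr0_norm // -[r]mul1r -ltr_pdivrMr //.
by move: cu_lt1; have := ltW u_gt0; lra.
Qed.

Lemma connect_short_path (T : finType) (e : rel T) (x y : T) : connect e x y ->
  exists p, [/\ path e x p, last x p = y & (size p < #|T|)%N].
Proof.
move=> /connectP[p p_path ->]; have [q q_path q_uniq _] := shortenP p_path.
exists q; split=> //; move/card_uniqP: q_uniq => /= <-; exact: max_card.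
Qed.

Lemma C1_on_derivable (R : realType) (V W : normedModType R) (D : set V) (f : V -> W)
    (x v : V) :
  C1_on D f -> D x -> derivable f x v.
Proof. by move=> [U [_ [DU f_C1]]] Dx; apply: (f_C1 v).1; exact: DU. Qed.

Lemma is_min_weight_gt0 (R : realType) (n : nat) (w : 'I_n -> 'I_n -> R) (m : R) :
  is_min_weight w m -> 0 < m.
Proof. by move=> [_ [i [j [w_gt0 <-]]]]. Qed.

Lemma is_max_weight_gt0 (R : realType) (n : nat) (w : 'I_n -> 'I_n -> R) (m : R) :
  is_max_weight w m -> 0 < m.
Proof. by move=> [_ [i [j [w_gt0 <-]]]]. Qed.

Lemma is_max_weight_ub (R : realType) (n : nat) (w : 'I_n -> 'I_n -> R) (m : R) :
  (forall i j, 0 <= w i j) -> is_max_weight w m -> forall i j, w i j <= m.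
Proof.
move=> w_ge0 w_max i j; have [/w_max.1 //|w_le0] := ltrP 0 (w i j).
exact: le_trans w_le0 (ltW (is_max_weight_gt0 w_max)).
Qed.

Section NeighbourRatio.
Variables (R : realType) (n : nat) (wmin wmax M c : R).
Hypotheses (wmin_gt0 : 0 < wmin) (wmax_ge0 : 0 <= wmax) (M_ge0 : 0 <= M) (c_ge1 : 1 <= c).

(* c covers the neighbours with x_k <= c x_j; the other summand balances the flux
   wmin x_k / 2 - wmax x_j of a farther neighbour against the n others, each >= -B x_j. *)
Definition neighbour_ratio : R :=
  c + 2 * (wmax + n%:R * (wmax + Num.sqrt wmax * (c + 1) * M)) / wmin.

Let B := wmax + Num.sqrt wmax * (c + 1) * M.

Let B_ge0 : 0 <= B.
Proof. by rewrite addr_ge0 // !mulr_ge0 ?sqrtr_ge0 ?addr_ge0 ?(le_trans ler01 c_ge1). Qed.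

Lemma neighbour_ratio_ge : c <= neighbour_ratio.
Proof.
rewrite /neighbour_ratio lerDl divr_ge0 ?(ltW wmin_gt0) // mulr_ge0 // addr_ge0 //.
by rewrite mulr_ge0 //; exact: B_ge0.
Qed.

Let ratio_ge1 : 1 <= neighbour_ratio := le_trans c_ge1 neighbour_ratio_ge.

Variables (w : 'I_n -> 'I_n -> R) (h : R -> R).
Hypotheses (w_sym : forall i j, w i j = w j i) (w_diag : forall i, w i i = 0)
  (w_ge0 : forall i j, 0 <= w i j)
  (w_min : forall i j, 0 < w i j -> wmin <= w i j) (w_max : forall i j, w i j <= wmax).
Hypotheses (h_ge0 : forall u, 0 < u -> 0 <= h u) (h_le : forall u, 0 < u -> h u <= M)
  (h_small : forall u, 0 < u -> c * u < 1 -> 4 * Num.sqrt wmax * h u <= wmin).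

Section Flux.
Variables (x : 'rV[R]_n) (Am : 'M[R]_n) (j : 'I_n).
Hypotheses (x_gt0 : forall i, 0 < x ord0 i)
  (A_bound : forall k, 0 < w k j -> `|Am k j| <= (x ord0 k + x ord0 j) * h (x ord0 j / x ord0 k)).

Let flux k := Num.sqrt (w j k) * Am k j + w j k * (x ord0 k - x ord0 j).

Lemma graph_div_lap_flux : (graph_div w Am + graph_lap w x) ord0 j = \sum_k flux k.
Proof.
rewrite !mxE big_mkcond -big_split /=; apply: eq_bigr => k _.
by rewrite /flux; case: eqP => [->|_]; rewrite ?w_diag ?sqrtr0 ?mul0r.
Qed.

Let flux_div_ge k : 0 < w j k ->
  - (Num.sqrt wmax * ((x ord0 k + x ord0 j) * h (x ord0 j / x ord0 k)))
    <= Num.sqrt (w j k) * Am k j.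
Proof.
move=> w_gt0.
have : `|Am k j| <= (x ord0 k + x ord0 j) * h (x ord0 j / x ord0 k).
  by apply: A_bound; rewrite w_sym.
rewrite ler_norml => /andP[A_ge _].
apply: le_trans (_ : Num.sqrt (w j k) * - ((x ord0 k + x ord0 j) * h (x ord0 j / x ord0 k)) <= _).
  rewrite mulrN lerN2; apply: ler_wpM2r; last by rewrite ler_sqrt.
  by rewrite mulr_ge0 ?h_ge0 ?divr_gt0 ?addr_ge0 ?ltW ?x_gt0.
by rewrite ler_wpM2l ?sqrtr_ge0.
Qed.

Lemma flux_ge_far k : 0 < w j k -> c * x ord0 j < x ord0 k ->
  wmin / 2 * x ord0 k - wmax * x ord0 j <= flux k.
Proof.
move=> w_gt0 far; have [y_gt0 z_gt0] := (x_gt0 j, x_gt0 k).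
have u_gt0 : 0 < x ord0 j / x ord0 k by rewrite divr_gt0.
have := h_small u_gt0; rewrite mulrA ltr_pdivrMr // mul1r => /(_ far) h_tiny.
have := flux_div_ge w_gt0; rewrite /flux.
move: h_tiny (h_ge0 u_gt0) (w_min w_gt0) (w_max j k) (sqrtr_ge0 wmax).
move: (x ord0 j) (x ord0 k) (h _) (w j k) (Num.sqrt wmax) y_gt0 z_gt0 far.
move=> y z hu wjk sw y_gt0 z_gt0 far h_tiny hu_ge0 wmin_le wmax_ge sw_ge0 div_ge.
have y_lt_z : y < z by have := c_ge1; nra.
have div_small : sw * ((z + y) * hu) <= z * (wmin / 2).
  apply: le_trans (_ : sw * (2 * z * hu) <= _).
    by rewrite ler_wpM2l // ler_wpM2r //; lra.
  have := ler_wpM2l (ltW z_gt0) h_tiny; lra.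
have := ler_wpM2r (ltW z_gt0) wmin_le; have := ler_wpM2r (ltW y_gt0) wmax_ge.
lra.
Qed.

Lemma flux_ge k : - (B * x ord0 j) <= flux k.
Proof.
have y_gt0 := x_gt0 j; have z_gt0 := x_gt0 k.
have By_ge0 : 0 <= B * x ord0 j by rewrite mulr_ge0 ?B_ge0 ?ltW.
have [w_gt0|w_le0] := ltrP 0 (w j k); last first.
  have w_eq0 : w j k = 0 by apply/le_anti; rewrite w_le0 w_ge0.
  by rewrite /flux w_eq0 sqrtr0 !mul0r addr0 oppr_le0.
have B_y : B * x ord0 j = wmax * x ord0 j + Num.sqrt wmax * (c + 1) * M * x ord0 j.
  by rewrite /B mulrDl.
have sMy_ge0 : 0 <= Num.sqrt wmax * (c + 1) * M * x ord0 j.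
  by rewrite !mulr_ge0 ?sqrtr_ge0 ?M_ge0 ?(ltW y_gt0) ?addr_ge0 ?ler01 ?(le_trans ler01 c_ge1).
rewrite B_y; have [far|near] := ltrP (c * x ord0 j) (x ord0 k).
  have := flux_ge_far w_gt0 far; have := mulr_ge0 (ltW wmin_gt0) (ltW z_gt0); lra.
have u_gt0 : 0 < x ord0 j / x ord0 k by rewrite divr_gt0.
have div_le : Num.sqrt wmax * ((x ord0 k + x ord0 j) * h (x ord0 j / x ord0 k))
    <= Num.sqrt wmax * ((c + 1) * x ord0 j * M).
  rewrite ler_wpM2l ?sqrtr_ge0 //.
  apply: ler_pM; rewrite ?addr_ge0 ?h_ge0 ?h_le ?(ltW (x_gt0 _)) //.
  by move: near; lra.
have := flux_div_ge w_gt0; rewrite /flux.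
have := ler_wpM2r (ltW y_gt0) (w_max j k); have := mulr_ge0 (w_ge0 j k) (ltW z_gt0).
lra.
Qed.

Lemma neighbour_le k : (graph_div w Am + graph_lap w x) ord0 j <= 0 -> 0 < w j k ->
  x ord0 k <= neighbour_ratio * x ord0 j.
Proof.
move=> rhs_le0 w_gt0; have y_gt0 := x_gt0 j.
have [near|far] := lerP (x ord0 k) (c * x ord0 j).
  by apply: le_trans near _; rewrite ler_wpM2r ?neighbour_ratio_ge ?(ltW y_gt0).
have By_ge0 : 0 <= B * x ord0 j by rewrite mulr_ge0 ?B_ge0 ?ltW.
have sum_ge : flux k + B * x ord0 j <= n%:R * (B * x ord0 j).
  apply: le_trans (_ : \sum_i (flux i + B * x ord0 j) <= _).
    rewrite (bigD1 k) //= lerDl sumr_ge0 // => i _.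
    by rewrite -lerBlDr sub0r flux_ge.
  by rewrite big_split /= sumr_const card_ord mulr_natl gerDr -graph_div_lap_flux.
have far_ge := flux_ge_far w_gt0 far.
rewrite /neighbour_ratio -/B mulrDl.
apply: le_trans (_ : 2 * (wmax + n%:R * B) / wmin * x ord0 j <= _); last first.
  by rewrite -subr_ge0 addrK mulr_ge0 ?(ltW y_gt0) ?(le_trans ler01 c_ge1).
rewrite mulrAC ler_pdivlMr //.
move: far_ge sum_ge By_ge0; lra.
Qed.
End Flux.

Section Flow.
Variables (A : R * 'rV[R]_n -> 'M[R]_n) (rho : R -> 'rV[R]_n) (t0 eps : R).
Hypotheses (t0_ge0 : 0 <= t0)
  (rho_derivable : forall s, 0 <= s <= t0 -> derivable rho s 1)
  (rho_gt0 : forall s, 0 <= s <= t0 -> forall i, 0 < rho s ord0 i)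
  (rho_ode : forall s, 0 <= s <= t0 ->
     'D_1 rho s = graph_div w (A (s, rho s)) + graph_lap w (rho s))
  (A_bound : forall s i k, 0 <= s <= t0 -> 0 < w i k ->
     `|A (s, rho s) i k| <= (rho s ord0 i + rho s ord0 k) * h (rho s ord0 k / rho s ord0 i))
  (rho0_gt : forall i, eps < rho 0 ord0 i).

Let reaches i L := exists2 s, 0 <= s <= t0 & rho s ord0 i <= L.

Let reaches_gt0 i L : reaches i L -> 0 < L.
Proof. by case=> s /rho_gt0/(_ i)/lt_le_trans; apply. Qed.

Lemma min_spreads_to_neighbour j k L : 0 < w j k -> L < eps -> reaches j L ->
  reaches k (neighbour_ratio * L).
Proof.
move=> w_gt0 L_lt [s s_in rho_s_le].
have rho_j_cont : {within `[0, t0], continuous (fun s => rho s ord0 j)}.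
  apply: (@within_continuous_comp _ _ _ _ rho (fun v : 'rV[R]_n => v ord0 j)).
    by move=> v _; exact: coord_continuous.
  by apply: derivable_within_continuous => s'; rewrite in_itv /=; exact: rho_derivable.
have [tm tm_in tm_min] := EVT_min t0_ge0 rho_j_cont.
move: tm_in; rewrite in_itv /= => tm_in.
have min_le : rho tm ord0 j <= L.
  by apply: le_trans rho_s_le; apply: tm_min; rewrite in_itv.
have tm_gt0 : 0 < tm.
  rewrite lt_def (andP tm_in).1 andbT; apply: contraTneq min_le => ->.
  by rewrite -ltNge (lt_trans L_lt).
have D_le0 : 'D_1 rho tm ord0 j <= 0.
  apply: (derive1_entry_le0_at_left_min (rho_derivable tm_in) tm_gt0) => s' /andP[s'_ge0 s'_le].
  by apply: tm_min; rewrite in_itv /= s'_ge0 (le_trans s'_le) ?(andP tm_in).2.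
rewrite rho_ode // in D_le0.
exists tm => //.
apply: le_trans (neighbour_le (rho_gt0 tm_in) _ D_le0 w_gt0) _.
  by move=> i w_ij; apply: A_bound.
by rewrite ler_wpM2l // (le_trans ler01 ratio_ge1).
Qed.

Lemma min_spreads_along_path i p L : path [rel a b | 0 < w a b] i p ->
  neighbour_ratio ^+ size p * L < eps -> reaches i L ->
  reaches (last i p) (neighbour_ratio ^+ size p * L).
Proof.
elim: p i L => [|k p IH] i L /=; first by rewrite mul1r.
move=> /andP[w_ik k_path] lt_eps reach_i.
have L_gt0 := reaches_gt0 reach_i.
have L_lt : L < eps.
  by apply: le_lt_trans lt_eps; rewrite ler_peMl ?(ltW L_gt0) ?exprn_ege1.
rewrite exprSr -mulrA in lt_eps *.
exact: IH k_path lt_eps (min_spreads_to_neighbour w_ik L_lt reach_i).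
Qed.

Lemma min_spreads i k L m : connect [rel a b | 0 < w a b] i k -> (n <= m)%N ->
  neighbour_ratio ^+ m * L < eps -> reaches i L -> reaches k (neighbour_ratio ^+ m * L).
Proof.
move=> /connect_short_path[p [p_path <- p_size]] n_le_m lt_eps reach_i.
have L_ge0 := ltW (reaches_gt0 reach_i).
have ratio_le : neighbour_ratio ^+ size p <= neighbour_ratio ^+ m.
  by rewrite ler_weXn2l // ltnW // (leq_trans p_size) ?card_ord.
have [|s s_in rho_le] := min_spreads_along_path p_path _ reach_i.
  exact: le_lt_trans (ler_wpM2r L_ge0 ratio_le) lt_eps.
by exists s => //; apply: le_trans rho_le (ler_wpM2r L_ge0 ratio_le).
Qed.

End Flow.
End NeighbourRatio.

Theorem lemma2p1 (R : realType) (n : nat) (h : R -> R) (wmin wmax : R) :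
  h_admissible h ->
  exists K : R, 1 < K /\
  forall (w : 'I_n -> 'I_n -> R),
    weighted_graph w -> is_min_weight w wmin -> is_max_weight w wmax ->
  forall (T : R) (A : (R * 'rV[R]_n)%type -> 'M[R]_n),
    0 < T ->
    C1_on (@time_cube R n T) A ->
    (forall p, @time_cube R n T p -> (A p)^T = - A p) ->
    (forall p i j, @time_cube R n T p -> 0 < w i j ->
       `|A p i j| <= (p.2 ord0 i + p.2 ord0 j) * h (p.2 ord0 j / p.2 ord0 i)) ->
  forall (eps : R) (mu : 'rV[R]_n) (t0 : R) (rho : R -> 'rV[R]_n) (delta : R) (i0 : 'I_n),
    0 < eps -> P_eps eps mu -> 0 < t0 <= T ->
    C1_on `[0, t0] rho ->
    (forall s, 0 <= s <= t0 -> in_unit_cube (rho s)) ->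
    (forall s, 0 <= s <= t0 ->
       'D_1 rho s = graph_div w (A (s, rho s)) + graph_lap w (rho s)) ->
    rho 0 = mu ->
    0 < delta < eps / K ->
    rho t0 ord0 i0 = delta ->
    (forall s, 0 <= s < t0 -> rho s ord0 i0 != delta) ->
  forall i : 'I_n, exists2 s : R, 0 <= s <= t0 & rho s ord0 i <= K * delta.
Proof.
move=> [h_gt0 [[M h_le] [h_cvg0 _]]].
have [[wmin_gt0 wmax_gt0]|no_edge] := pselect (0 < wmin /\ 0 < wmax); last first.
  exists 2; split=> [|w _ /is_min_weight_gt0 ? /is_max_weight_gt0 ?]; first lra.
  by exfalso; apply: no_edge.
have M_ge0 : 0 <= M := le_trans (ltW (h_gt0 1 ltr01)) (h_le 1 ltr01).
have sw_gt0 : 0 < Num.sqrt wmax by rewrite sqrtr_gt0.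
have [c c_gt1 h_near0] :=
  cvg_at_right0_le (divr_gt0 wmin_gt0 (mulr_gt0 (ltr0n _ 4) sw_gt0)) h_cvg0.
have h_small u : 0 < u -> c * u < 1 -> 4 * Num.sqrt wmax * h u <= wmin.
  by move=> u_gt0 /(h_near0 _ u_gt0); rewrite ler_pdivlMr ?mulr_gt0 // mulrC.
set C := neighbour_ratio n wmin wmax M c.
have C_gt1 : 1 < C.
  exact: lt_le_trans c_gt1 (neighbour_ratio_ge n wmin_gt0 (ltW wmax_gt0) M_ge0 (ltW c_gt1)).
exists (C ^+ n.+1); split; first by rewrite exprn_egt1.
move=> w [w_sym [w_diag [w_ge0 w_conn]]] [w_min _] /(is_max_weight_ub w_ge0) w_le.
move=> T A _ _ _ A_bound eps mu t0 rho delta i0 _ [_ mu_gt] /andP[t0_gt0 t0_le] rho_C1.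
move=> rho_cube rho_ode rho0 /andP[delta_gt0 delta_lt] rho_t0 _ i.
have rho_gt0 s : 0 <= s <= t0 -> forall k, 0 < rho s ord0 k.
  by move=> s_in k; have /andP[] := rho_cube s s_in k.
have A_bound_rho s a b : 0 <= s <= t0 -> 0 < w a b -> `|A (s, rho s) a b|
    <= (rho s ord0 a + rho s ord0 b) * h (rho s ord0 b / rho s ord0 a).
  move=> /andP[s_ge0 s_le] w_gt0; apply: A_bound w_gt0; split; last exact/rho_cube/andP.
  by rewrite /= s_ge0 (le_trans s_le).
apply: (min_spreads wmin_gt0 (ltW wmax_gt0) M_ge0 (ltW c_gt1) w_sym w_diag w_ge0 w_min w_le
  (fun u u_gt0 => ltW (h_gt0 u u_gt0)) h_le h_small (ltW t0_gt0) _ rho_gt0 rho_ode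
  A_bound_rho _ (w_conn i0 i) (leqnSn n)).
- by move=> s s_in; apply: C1_on_derivable rho_C1 _; rewrite /= in_itv.
- by move=> k; rewrite rho0.
- by rewrite mulrC -ltr_pdivlMr // exprn_gt0 // (lt_trans ltr01).
- by exists t0; rewrite ?rho_t0 ?lexx ?ltW.
Qed.
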